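(* A subset $S\subseteq N^{\mathbb N}$ is a safety constraint if and only if there exists $P\in\Omega$ (a prefix-free subset of $N^+$) such that $S=C_\omega(P)$, where $\omega$ is the final detector.
   Context: Fix a finite nonempty set $N$; $N^+$ is the set of nonempty finite words, $N^{\mathbb N}$ the set of streams; $s[0{:}m]$ is the prefix of length $m$, $s[m{:}]$ the suffix $k\mapsto s(k+m)$; for a set $A$ of words, $n^{-1}\cdot A=\{u:nu\in A\}$; a set of words is prefix-free if no proper prefix (including the empty word) of a member is a member. A safety constraint is a set $S\subseteq N^{\mathbb N}$ such that any $s$ with ''for every $m$ there is $s'\in S$ with $s'[0{:}m]=s[0{:}m]$'' belongs to $S$. Let $\mathbf 1=\{\Downarrow\}$. A detector is a set $|a|$ with $a:|a|\to(\mathbf 1+|a|)^N$. The final detector $\omega$ has carrier $\Omega$, the set of prefix-free subsets of $N^+$, with $\omega(P)(n)=\Downarrow$ if $n\in P$ and $n^{-1}\cdot P$ otherwise. For $s\in N^{\mathbb N}$, $\mathrm{Join}([s],a)$ maps $(t,y)\in\{s[k{:}]\}\times|a|$ to $\Downarrow$ if $a(y)(t(0))=\Downarrow$, else to $(t[1{:}],a(y)(t(0)))$; iterates $g^{(1)}=g$, $g^{(k+1)}(z)=\Downarrow$ if $g^{(k)}(z)=\Downarrow$, else $g(g^{(k)}(z))$. $C_a(x)=\{s\in N^{\mathbb N}:\mathrm{Join}([s],a)^{(k)}(s,x)\neq\Downarrow\ \forall k\ge1\}$. *)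

From mathcomp Require Import all_boot.
Set Implicit Arguments. Unset Strict Implicit. Unset Printing Implicit Defensive.

Section Detectors.
Variable N : finType.

Definition stream := nat -> N.

Definition safety (S : stream -> Prop) : Prop :=
  forall s : stream,
    (forall m : nat, exists s' : stream, S s' /\ (forall k, k < m -> s' k = s k)) ->
    S s.

Definition prefix_free (P : pred (seq N)) : Prop :=
  (forall w, P w -> w <> [::]) /\
  (forall u v, P u -> P (u ++ v) -> v = [::]).

Definition Omega := {P : pred (seq N) | prefix_free P}.

Definition lquot (n : N) (P : pred (seq N)) : pred (seq N) := fun u => P (n :: u).

Lemma lquot_prefix_free (P : pred (seq N)) (n : N) :
  prefix_free P -> ~~ P [:: n] -> prefix_free (lquot n P).
Proof.
move=> [H1 H2] Hn; split.
- by move=> w Pw Ew; subst w; rewrite /lquot in Pw; rewrite Pw in Hn.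
- by move=> u v Pu Puv; apply: (H2 (n :: u) v).
Qed.

(* A detector with carrier X: a : X -> (1 + X)^N, encoding ⇓ as None. *)
Definition detector (X : Type) := X -> N -> option X.

Definition omega : detector Omega :=
  fun P n =>
    match boolP (sval P [:: n]) with
    | AltTrue _ => None
    | AltFalse h => Some (exist _ (lquot n (sval P)) (lquot_prefix_free (svalP P) h))
    end.

Definition join (X : Type) (a : detector X) (z : stream * X) : option (stream * X) :=
  match a z.2 (z.1 0) with
  | None => None
  | Some y' => Some ((fun k => z.1 k.+1), y')
  end.

(* Iterates: giter g 1 = g, giter g (k+1) z = ⇓ if giter g k z = ⇓ else g (giter g k z).
   (giter g 0 is the identity and is never used.) *)
Fixpoint giter (Z : Type) (g : Z -> option Z) (k : nat) (z : Z) : option Z :=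
  match k with
  | 0 => Some z
  | k'.+1 => match giter g k' z with None => None | Some z' => g z' end
  end.

Definition C (X : Type) (a : detector X) (x : X) (s : stream) : Prop :=
  forall k, 1 <= k -> giter (join a) k (s, x) <> None.

End Detectors.

(* A run of the final detector from P on s halts exactly when some nonempty
   prefix of s lies in P, so C_omega(P) is the set of streams avoiding P on
   all their prefixes; such a set is always a safety constraint.  Conversely
   a safety constraint S is recovered from its first violations: the
   nonempty words that are not prefixes of a member of S while all their
   shorter nonempty prefixes are.  They form a prefix-free set, and a stream
   all of whose prefixes extend to members of S lies in S by safety. *)
From mathcomp Require Import all_boot.
From mathcomp Require Import boolp.
Set Implicit Arguments. Unset Strict Implicit. Unset Printing Implicit Defensive.

Section StreamPrefix.
Variable T : Type.

Definition stream_prefix (s : nat -> T) (m : nat) : seq T := [seq s i | i <- iota 0 m].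

Lemma size_stream_prefix s m : size (stream_prefix s m) = m.
Proof. by rewrite size_map size_iota. Qed.

Lemma stream_prefixS s m :
  stream_prefix s m.+1 = s 0 :: stream_prefix (fun k => s k.+1) m.
Proof. by rewrite /stream_prefix /= (iotaDl 1 0) -map_comp. Qed.

Lemma take_stream_prefix s i j : i <= j -> take i (stream_prefix s j) = stream_prefix s i.
Proof. by move=> le_ij; rewrite -map_take take_iota (minn_idPl le_ij). Qed.

Lemma eq_stream_prefix s s' m :
  stream_prefix s m = stream_prefix s' m <-> (forall k, k < m -> s k = s' k).
Proof.
split=> [eq_ss' k lt_km | eq_ss'].
  have := congr1 (nth (s 0) ^~ k) eq_ss'.
  by rewrite !(nth_map 0) ?size_iota // nth_iota.
by apply/eq_in_map => k; rewrite mem_iota => /andP[_ /eq_ss'].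
Qed.

End StreamPrefix.

Lemma giterSl (Z : Type) (g : Z -> option Z) k z :
  giter g k.+1 z = if g z is Some z' then giter g k z' else None.
Proof.
elim: k z => [|k IHk] z; first by rewrite /=; case: (g z).
transitivity (if giter g k.+1 z is Some z' then g z' else None) => //.
by rewrite IHk; case: (g z).
Qed.

Section FinalDetector.
Variable N : finType.

Lemma giter_join_omega k (P : Omega N) (s : stream N) :
  giter (join (@omega N)) k (s, P) <> None <->
  (forall j, j < k -> ~~ sval P (stream_prefix s j.+1)).
Proof.
elim: k P s => [|k IHk] P s; first by split.
rewrite giterSl /join /omega /=.
destruct (boolP (sval P [:: s 0])) as [Ps0 | nPs0]; first by split=> // /(_ 0 isT); rewrite Ps0.
rewrite IHk /lquot /=; split=> [nP [|j] //= lt_jk | nP j lt_jk].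
  by rewrite stream_prefixS nP.
by rewrite -stream_prefixS; apply: nP.
Qed.

Lemma C_omega (P : Omega N) (s : stream N) :
  C (@omega N) P s <-> (forall j, ~~ sval P (stream_prefix s j.+1)).
Proof.
split=> [Cs j | nP k _]; last by apply/giter_join_omega => j _.
by have /giter_join_omega := Cs j.+1 isT; apply.
Qed.

Lemma safety_C_omega (P : Omega N) : safety (C (@omega N) P).
Proof.
move=> s near_s; apply/C_omega => j.
have [s' [/C_omega nPs' eq_s's]] := near_s j.+1.
by move/eq_stream_prefix: eq_s's => <-.
Qed.

Section FirstViolations.
Variable S : stream N -> Prop.

Definition extendable (w : seq N) : Prop :=
  exists2 s, S s & stream_prefix s (size w) = w.

Definition first_violation : pred (seq N) := fun w =>
  `[< [/\ w <> [::], ~ extendable w &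
         forall i, 0 < i < size w -> extendable (take i w)] >].

Lemma first_violation_prefix_free : prefix_free first_violation.
Proof.
split=> [w /asboolP[] // | u [|x v] /asboolP[u_nil u_bad _] /asboolP[_ _ ext_uv] //].
exfalso; apply: u_bad; rewrite -(take_size_cat (x :: v) (erefl (size u))).
apply: ext_uv; rewrite size_cat /= addnS ltnS leq_addr andbT lt0n size_eq0.
exact/eqP.
Qed.

Definition first_violations : Omega N := exist _ _ first_violation_prefix_free.

Lemma C_first_violations s : S s -> C (@omega N) first_violations s.
Proof.
move=> Ss; apply/C_omega => j; apply/asboolP => -[_ not_ext _].
by apply: not_ext; exists s; rewrite ?size_stream_prefix.
Qed.

Lemma C_first_violations_extendable s :
  C (@omega N) first_violations s -> forall m, extendable (stream_prefix s m.+1).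
Proof.
move/C_omega=> no_violation m; apply: contrapT => not_ext.
pose bad j := ~~ `[< extendable (stream_prefix s j.+1) >].
have ex_bad : exists j, bad j by exists m; apply/asboolP.
case: (ex_minnP ex_bad) => j /asboolP not_ext_j min_j.
apply: (negP (no_violation j)); apply/asboolP; split=> // i.
rewrite size_stream_prefix => /andP[lt0i lt_ij].
rewrite take_stream_prefix; last exact: ltnW.
case: i lt0i lt_ij => // i _ lt_ij.
apply/asboolP/negPn/negP => /min_j.
by rewrite leqNgt -ltnS lt_ij.
Qed.

Hypothesis safeS : safety S.

Lemma safety_C_first_violations s : C (@omega N) first_violations s -> S s.
Proof.
move=> Cs; apply: safeS => m.
have [s' Ss' eq_s's] := C_first_violations_extendable Cs m.
move: eq_s's; rewrite size_stream_prefix => /eq_stream_prefix eq_s's.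
by exists s'; split=> // k /ltnW; apply: eq_s's.
Qed.

End FirstViolations.
End FinalDetector.

Theorem mainTheorem13 (N : finType) (hN : 0 < #|N|) (S : stream N -> Prop) :
  safety S <-> exists P : Omega N, forall s : stream N, S s <-> C (@omega N) P s.
Proof.
split=> [safeS | [P defS]].
  exists (first_violations S) => s; split; first exact: C_first_violations.
  exact: safety_C_first_violations.
move=> s near_s; apply/defS/safety_C_omega => m.
by have [s' [/defS Cs' eq_s's]] := near_s m; exists s'.
Qed.
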